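(* Fix $k\ge1$. For every $j\ge2$, $$q(j+1)-q(j)=\begin{cases}F_{2k}&\text{if the }(j-1)\text{th letter of }\mathcal S\text{ is }A,\\ F_{2k+1}&\text{if the }(j-1)\text{th letter of }\mathcal S\text{ is }B.\end{cases}$$
   Context: Fibonacci numbers: $F_1=F_2=1$, $F_{n+1}=F_n+F_{n-1}$ for $n\ge2$. Chung–Graham decomposition: every positive integer $n$ has a unique representation $n=\sum_{i\ge1}c_iF_{2i}$ with $c_i\in\{0,1,2\}$, only finitely many nonzero, such that whenever $c_i=c_j=2$ with $i<j$ there is $k$ with $i<k<j$ and $c_k=0$. Let $\mathcal{CG}(n)$ be the set of $F_{2i}$ with $c_i\neq0$. For $k\ge1$, $A_{2k}=\{n\ge1:\min\mathcal{CG}(n)=F_{2k}\}$, and $q(1)<q(2)<q(3)<\cdots$ denote the elements of $A_{2k}$ listed in increasing order. Golden string: define finite words over $\{A,B\}$ by $S_1=B$, $S_2=BA$, $S_n=S_{n-1}:S_{n-2}$ for $n\ge3$, where $:$ denotes concatenation; each $S_n$ is a prefix of $S_{n+1}$, and $\mathcal S$ is the infinite word having every $S_n$ as a prefix ($\mathcal S=BABBABABBABB\ldots$). Letters of $\mathcal S$ are indexed starting at $1$. *)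

From mathcomp Require Import all_boot.
Set Implicit Arguments. Unset Strict Implicit. Unset Printing Implicit Defensive.

Fixpoint F (n : nat) : nat :=
  match n with
  | 0 => 0
  | 1 => 1
  | (m.+1 as p).+1 => F p + F m
  end.

(* A coefficient list s = [:: c_1; c_2; ...; c_L] (c_i = nth 0 s (i-1)),
   all later coefficients being 0. *)
Definition cg_value (s : seq nat) : nat :=
  \sum_(i < size s) nth 0 s i * F (2 * i.+1).

Definition CG_rep (s : seq nat) (n : nat) : Prop :=
  [/\ all (fun c => c <= 2) s,
      (forall i j, i < j -> j < size s -> nth 0 s i = 2 -> nth 0 s j = 2 ->
         exists l, i < l < j /\ nth 0 s l = 0)
    & cg_value s = n].

Definition in_CG (s : seq nat) (x : nat) : Prop :=
  exists i, 1 <= i /\ nth 0 s i.-1 <> 0 /\ x = F (2 * i).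

(* n \in A_{2k} : n >= 1 and min CG(n) = F_{2k}
   (CG(n) computed from the (unique) Chung--Graham decomposition of n). *)
Definition in_A (k n : nat) : Prop :=
  1 <= n /\
  exists s, CG_rep s n /\ in_CG s (F (2 * k)) /\
            (forall x, in_CG s x -> F (2 * k) <= x).

Definition enumerates_A (k : nat) (q : nat -> nat) : Prop :=
  (forall j, 1 <= j -> q j < q j.+1) /\
  (forall n, in_A k n <-> exists j, 1 <= j /\ q j = n).

Inductive letter := LA | LB.

Fixpoint Sw (n : nat) : seq letter :=
  match n with
  | 0 => [:: LB]            (* unused *)
  | 1 => [:: LB]
  | 2 => [:: LB; LA]
  | (m.+1 as p).+1 => Sw p ++ Sw m
  end.

(* The i-th letter (1-indexed) of the infinite word S: read it off S_i,
   which has length F_{i+1} >= i and is a prefix of S. *)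
Definition golden_letter (i : nat) : letter := nth LA (Sw i) i.-1.

(* Write n in A_{2k} through its Chung-Graham digits as sum_i f_i F_{2(k+i)} with f_0 <> 0.
   Since F_{2(k+i)} = F_{2i-1} F_{2k} + F_{2i} F_{2k+1}, n = a F_{2k} + b F_{2k+1} with
   a = sum_i f_i F_{2i-1}, b = sum_i f_i F_{2i}.  Reading the same digits against F_1, F_3, F_5, ...
   gives an index j, and a - 1, b are the numbers of letters A and B among the first j - 1 letters
   of the word A S: the self-similarity of S makes the prefix of length F_{2n+1} of A S (which
   holds F_{2n-1} letters A and F_{2n} letters B) repeat right after itself, up to position
   F_{2n+2}, which is exactly what appending a digit 1 or 2 requires.  Every index j arises this
   way, so j |-> (1 + #A) F_{2k} + #B F_{2k+1} is an increasing enumeration of A_{2k}, hence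
   equals q, and q(j+1) - q(j) is F_{2k} or F_{2k+1} according to the j-th letter of A S, that
   is the (j-1)-th letter of S. *)

From mathcomp Require Import all_boot zify.
Set Implicit Arguments. Unset Strict Implicit.

Lemma FSS m : F m.+2 = F m.+1 + F m.
Proof. by []. Qed.

Arguments F : simpl never.

Lemma F_gt0 m : 0 < m -> 0 < F m.
Proof.
elim/ltn_ind: m => [[|[|[|m]]]] IH // _.
by rewrite FSS; have := IH m.+2 (ltnSn _) isT; lia.
Qed.

Lemma leq_F m n : m <= n -> F m <= F n.
Proof.
move=> /subnKC <-; elim: (n - m) => [|d IH]; first by rewrite addn0.
by rewrite addnS; apply: leq_trans IH _; case: (m + d) => // p; rewrite FSS leq_addr.
Qed.

Lemma ltn_F m n : 2 <= m -> m < n -> F m < F n.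
Proof.
case: m => [|[|m]] // _ ltmn; have := leq_F ltmn.
by rewrite FSS; have := F_gt0 (isT : 0 < m.+1); lia.
Qed.

Lemma leq_idx_F m : m <= F m.+1.
Proof.
elim/ltn_ind: m => [[|[|m]]] IH //.
by rewrite FSS; have := IH m.+1 (ltnSn _); have := F_gt0 (isT : 0 < m.+1); lia.
Qed.

Lemma F_add m n : F (m + n).+1 = F m.+1 * F n.+1 + F m * F n.
Proof.
elim: m n => [|m IH] n; first by rewrite add0n -[F 1]/1 -[F 0]/0; lia.
by rewrite addSn -addnS IH FSS FSS; lia.
Qed.

(* [Fodd i] is F_{2i-1}, with the convention F_{-1} = 1. *)
Definition Fodd (i : nat) : nat := if i is 0 then 1 else F (2 * i).-1.
Definition Feven (i : nat) : nat := F (2 * i).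

Lemma F_even_add k i : F (2 * (k + i)) = Fodd i * F (2 * k) + Feven i * F (2 * k).+1.
Proof.
case: i => [|i]; first by rewrite addn0 mul1n mul0n addn0.
have -> : 2 * (k + i.+1) = ((2 * i).+1 + 2 * k).+1 by lia.
rewrite F_add /Fodd /Feven (_ : 2 * i.+1 = (2 * i).+2) /=; lia.
Qed.

Definition isA (x : letter) : bool := if x is LA then true else false.
Definition isB (x : letter) : bool := if x is LB then true else false.

Lemma SwSS m : 0 < m -> Sw m.+2 = Sw m.+1 ++ Sw m.
Proof. by case: m. Qed.

Lemma size_Sw m : 0 < m -> size (Sw m) = F m.+1.
Proof.
elim/ltn_ind: m => [[|[|[|m]]]] IH // _.
by rewrite SwSS // size_cat !IH.
Qed.

Lemma count_Sw m : 0 < m -> count isA (Sw m) = F m.-1 /\ count isB (Sw m) = F m.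
Proof.
elim/ltn_ind: m => [[|[|[|m]]]] IH // _.
have [a1 b1] := IH m.+2 (ltnSn _) isT.
have [a2 b2] := IH m.+1 (leqW (ltnSn _)) isT.
by rewrite SwSS // !count_cat a1 b1 a2 b2.
Qed.

Lemma Sw_ext m : 0 < m -> exists s, Sw m.+1 = Sw m ++ s.
Proof.
case: m => [|[|m]] // _; first by exists [:: LA].
by exists (Sw m.+1); rewrite SwSS.
Qed.

Lemma nth_Sw_ext m n i : 0 < m -> m <= n -> i < size (Sw m) ->
  nth LA (Sw n) i = nth LA (Sw m) i.
Proof.
move=> m_gt0 /subnKC <-; elim: (n - m) => [|d IH] ltim; first by rewrite addn0.
have md_gt0 : 0 < m + d by apply: leq_trans m_gt0 (leq_addr d m).
rewrite addnS; have [s ->] := Sw_ext md_gt0; rewrite nth_cat IH //.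
by rewrite (leq_trans ltim) // !size_Sw // leq_F // leq_addr.
Qed.

Lemma nth_Sw m i : 0 < m -> i < F m.+1 -> nth LA (Sw m) i = golden_letter i.+1.
Proof.
move=> m_gt0 ltim; rewrite /golden_letter /=.
have ltii : i < size (Sw i.+1) by rewrite size_Sw // (leq_trans _ (leq_idx_F _)).
have ltim' : i < size (Sw m) by rewrite size_Sw.
case: (leqP m i.+1) => [lemi | /ltnW ltmi]; first by rewrite (nth_Sw_ext m_gt0 lemi).
by rewrite (nth_Sw_ext _ ltmi).
Qed.

Lemma Sw_golden m : 0 < m -> Sw m = [seq golden_letter i | i <- iota 1 (F m.+1)].
Proof.
move=> m_gt0; apply: (@eq_from_nth _ LA); first by rewrite size_map size_iota size_Sw.
move=> i; rewrite size_Sw // => ltim.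
by rewrite (nth_map 0) ?size_iota // nth_iota // nth_Sw.
Qed.

Lemma golden_shift m i : 0 < m -> i < F m.+1 ->
  golden_letter (F m.+2 + i.+1) = golden_letter i.+1.
Proof.
move=> m_gt0 ltim; rewrite addnS -(nth_Sw (m := m.+2)) //; last by rewrite [F m.+3]FSS ltn_add2l.
by rewrite SwSS // nth_cat size_Sw // ltnNge leq_addr /= addKn nth_Sw.
Qed.

Lemma golden_periodic m i : i.+3 <= F m.+1 ->
  golden_letter (F m + i.+1) = golden_letter i.+1.
Proof.
elim/ltn_ind: m i => -[|[|[|p]]] IH i // lt_i3.
case: (ltnP i (F p.+2)) => [lt_ip | le_pi]; first exact: golden_shift.
have -> : F p.+3 + i.+1 = F p.+4 + (i - F p.+2).+1 by rewrite [F p.+4]FSS; lia.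
rewrite golden_shift //; last by move: lt_i3; rewrite [F p.+4]FSS; lia.
rewrite -(IH p.+2 (ltnSn _)); first by congr golden_letter; lia.
by move: lt_i3; rewrite [F p.+4]FSS [F p.+3]FSS; lia.
Qed.

Lemma golden_letter_F_odd n : 0 < n -> golden_letter (F (2 * n).+1) = LA.
Proof.
elim: n => [|[|n] IH] // _.
have -> : F (2 * n.+2).+1 = F (2 * n.+1).+2 + (F (2 * n.+1).+1).-1.+1.
  by rewrite prednK ?F_gt0 // -FSS; congr F; lia.
by rewrite golden_shift // ?prednK ?IH ?F_gt0 // ltn_predL F_gt0.
Qed.

Definition ASletter (i : nat) : letter := if i is 1 then LA else golden_letter i.-1.

Definition AScount (p : pred letter) (j : nat) : nat :=
  count p [seq ASletter i | i <- iota 1 j.-1].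

Lemma ASletterS m : 0 < m -> ASletter m.+1 = golden_letter m.
Proof. by case: m. Qed.

Lemma AScountS p j : 0 < j -> AScount p j.+1 = AScount p j + p (ASletter j).
Proof.
case: j => // j _; rewrite /AScount -[(j.+2).-1]/(j.+1).
have -> : iota 1 j.+1 = iota 1 j ++ [:: j.+1] by rewrite -[in LHS](addn1 j) iotaD add1n.
by rewrite map_cat count_cat /= addn0.
Qed.

Lemma ASletter_shift n i : 0 < i < F (2 * n).+2 ->
  ASletter (F (2 * n).+1 + i) = ASletter i.
Proof.
case: n => [|n]; first by rewrite -[F (2 * 0).+2]/1; lia.
move=> /andP [i_gt0 ltiF]; have L_gt0 : 0 < F (2 * n.+1).+1 by rewrite F_gt0.
case: i i_gt0 ltiF => [|[|i]] // _ ltiF.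
  by rewrite addn1 ASletterS // golden_letter_F_odd.
by rewrite !addnS ASletterS ?addn_gt0 ?L_gt0 // -addnS golden_periodic.
Qed.

Lemma AScount_shift n p j : 0 < j <= F (2 * n).+2 ->
  AScount p (F (2 * n).+1 + j) = AScount p j + AScount p (F (2 * n).+1).+1.
Proof.
move=> /andP [j_gt0 lejF]; rewrite /AScount; set L := F (2 * n).+1.
rewrite (_ : (L + j).-1 = L + j.-1); last by lia.
rewrite iotaD map_cat count_cat addnC; congr (_ + _).
rewrite (addnC 1) iotaDl -map_comp; congr count; apply/eq_in_map => i.
rewrite mem_iota => /andP [i_gt0 ltij] /=.
by apply: ASletter_shift; lia.
Qed.

Lemma AScount_shiftn n p c j : 0 < j -> c.-1 * F (2 * n).+1 + j <= F (2 * n).+2 ->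
  AScount p (c * F (2 * n).+1 + j) = AScount p j + c * AScount p (F (2 * n).+1).+1.
Proof.
move=> j_gt0; elim: c => [|c IH] lecF; first by rewrite !mul0n add0n addn0.
have le_pred := leq_mul (leq_pred c) (leqnn (F (2 * n).+1)).
rewrite mulSn -addnA AScount_shift; last by move: lecF => /=; lia.
by rewrite IH; [lia | move: lecF => /=; lia].
Qed.

Lemma ASletter_iota L :
  [seq ASletter i | i <- iota 1 L.+1] = LA :: [seq golden_letter i | i <- iota 1 L].
Proof.
have -> : iota 1 L.+1 = 1 :: [seq 1 + i | i <- iota 1 L] by rewrite -iotaDl.
rewrite map_cons -map_comp.
by congr cons; apply/eq_in_map => i; rewrite mem_iota => /andP [i_gt0 _]; exact: ASletterS.
Qed.

Lemma AScount_block n : AScount isA (F (2 * n).+1).+1 = Fodd n /\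
  AScount isB (F (2 * n).+1).+1 = Feven n.
Proof.
case: n => [|n]; first by [].
set m := 2 * n.+1; have m_gt0 : 0 < m by [].
have [cA cB] := count_Sw m_gt0; have gL := golden_letter_F_odd (isT : 0 < n.+1).
rewrite Sw_golden // -/m in cA cB gL; rewrite /AScount -[(F m.+1).+1.-1]/(F m.+1).
rewrite -[Fodd _]/(F m.-1) -[Feven _]/(F m).
case: (F m.+1) (F_gt0 (isT : 0 < m.+1)) gL cA cB => // L _ gL.
rewrite ASletter_iota -(addn1 L) iotaD map_cat add1n !count_cat => <- <- /=.
by rewrite gL; split; rewrite addn0 addnC.
Qed.

Definition coefA (f : nat -> nat) (n : nat) : nat := \sum_(i < n) f i * Fodd i.
Definition coefB (f : nat -> nat) (n : nat) : nat := \sum_(i < n) f i * Feven i.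

Definition represents (f : nat -> nat) (n j : nat) : Prop :=
  coefA f n = (AScount isA j).+1 /\ coefB f n = AScount isB j.

Definition cg_digits (f : nat -> nat) (n : nat) : Prop :=
  (forall i, i < n -> f i <= 2) /\
  (forall i j, i < j -> j < n -> f i = 2 -> f j = 2 -> exists l, i < l < j /\ f l = 0).

Definition cg_closed (f : nat -> nat) (n : nat) : Prop :=
  forall i, i < n -> f i = 2 -> exists l, i < l < n /\ f l = 0.

Definition set_digit (f : nat -> nat) (n c : nat) : nat -> nat :=
  fun i => if i == n then c else f i.

Lemma set_digit_lt f n c i : i < n -> set_digit f n c i = f i.
Proof. by move=> ltin; rewrite /set_digit ltn_eqF. Qed.

Lemma set_digit_eq f n c : set_digit f n c n = c.
Proof. by rewrite /set_digit eqxx. Qed.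

Lemma eq_coef f g n : (forall i, i < n -> f i = g i) ->
  coefA f n = coefA g n /\ coefB f n = coefB g n.
Proof. by move=> efg; split; apply: eq_bigr => i _; rewrite efg. Qed.

Lemma eq_represents f g n j : (forall i, i < n -> f i = g i) ->
  represents f n j -> represents g n j.
Proof. by move=> /eq_coef [eA eB]; rewrite /represents eA eB. Qed.

Lemma eq_cg_digits f g n : (forall i, i < n -> f i = g i) -> cg_digits f n -> cg_digits g n.
Proof.
move=> efg [le2 sep]; split=> [i ltin | i j ltij ltjn]; first by rewrite -efg // le2.
have ltin := ltn_trans ltij ltjn; rewrite -!efg // => fi2 fj2.
have [l [/andP [ltil ltlj] fl0]] := sep i j ltij ltjn fi2 fj2.
by exists l; rewrite -efg ?ltil // (ltn_trans ltlj ltjn).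
Qed.

Lemma represents_extend f n j : 0 < j -> (f n).-1 * F (2 * n).+1 + j <= F (2 * n).+2 ->
  represents f n j -> represents f n.+1 (f n * F (2 * n).+1 + j).
Proof.
move=> j_gt0 lejF [eA eB]; have [bA bB] := AScount_block n.
rewrite /represents /coefA /coefB !big_ord_recr /= -/(coefA f n) -/(coefB f n).
by rewrite !AScount_shiftn // eA eB bA bB.
Qed.

Lemma represents_single f c : 0 < c <= 2 -> f 0 = c -> represents f 1 c.
Proof.
move=> /andP [c_gt0 le_c2] f0; rewrite /represents /coefA /coefB !big_ord1 f0 /= muln1 muln0.
by case: c c_gt0 le_c2 {f0} => [|[|[|]]].
Qed.

Lemma cg_digitsS f n : cg_digits f n.+1 -> cg_digits f n.
Proof. by move=> [le2 sep]; split=> [i ltin | i j ltij ltjn]; [apply: le2 | apply: sep]; lia. Qed.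

Lemma cg_digits_closed f n : cg_digits f n.+1 -> f n = 2 -> cg_closed f n.
Proof. by move=> [_ sep] fn2 i ltin fi2; apply: sep. Qed.

Lemma cg_closed_last f n : cg_closed f n.+1 -> f n <> 2.
Proof. by move=> cl fn2; have [l [/andP [ltnl ltln] _]] := cl n (ltnSn n) fn2; lia. Qed.

Lemma cg_closedS f n : cg_closed f n.+1 -> f n <> 0 -> cg_closed f n.
Proof.
move=> cl fn0 i ltin fi2; have [l [/andP [ltil ltln] fl0]] := cl i (leqW ltin) fi2.
have /eqP neln : l <> n by move=> eln; apply: fn0; rewrite -eln.
by exists l; split=> //; lia.
Qed.

Lemma cg_digits_set f n c : cg_digits f n -> c <= 2 -> (c = 2 -> cg_closed f n) ->
  cg_digits (set_digit f n c) n.+1.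
Proof.
move=> [le2 sep] le_c2 cl; split=> [i | i j ltij].
  by rewrite ltnS leq_eqVlt => /orP [/eqP -> | ltin]; rewrite ?set_digit_eq ?set_digit_lt ?le2.
rewrite ltnS leq_eqVlt => /orP [/eqP ejn | ltjn].
  subst j; rewrite set_digit_lt // set_digit_eq => fi2 c2.
  have [l [/andP [ltil ltln] fl0]] := cl c2 i ltij fi2.
  by exists l; rewrite set_digit_lt ?ltil.
have ltin := ltn_trans ltij ltjn; rewrite !set_digit_lt // => fi2 fj2.
have [l [/andP [ltil ltlj] fl0]] := sep i j ltij ltjn fi2 fj2.
by exists l; rewrite set_digit_lt ?ltil ?(ltn_trans ltlj ltjn).
Qed.

Lemma cg_closed_set f n c : c <> 2 -> c = 0 \/ cg_closed f n ->
  cg_closed (set_digit f n c) n.+1.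
Proof.
move=> c2 c0_cl i; rewrite ltnS leq_eqVlt => /orP [/eqP -> | ltin].
  by rewrite set_digit_eq.
rewrite set_digit_lt // => fi2; case: c0_cl => [c0 | cl].
  by exists n; rewrite set_digit_eq ltin ltnSn.
have [l [/andP [ltil ltln] fl0]] := cl i ltin fi2.
by exists l; rewrite set_digit_lt ?ltil ?(ltn_trans ltln (ltnSn n)).
Qed.

Lemma cg_digits_represents n f : 0 < n -> cg_digits f n -> f 0 <> 0 ->
  exists j, [/\ 0 < j <= F (2 * n).+1, cg_closed f n -> j <= F (2 * n)
              & represents f n j].
Proof.
elim: n => [|n IH] // _ dig f0; case: (posnP n) => [n0 | n_gt0].
  subst n; have le_f0 : f 0 <= 2 by apply: dig.1.
  exists (f 0); rewrite -[F (2 * 1).+1]/2 -[F (2 * 1)]/1; split; first by lia.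
    by move=> /cg_closed_last; lia.
  by apply: represents_single => //; lia.
have [j [/andP [j_gt0 lejL] cl_j rep]] := IH n_gt0 (cg_digitsS dig) f0.
have le_fn : f n <= 2 by apply: dig.1.
have eF2 := FSS (2 * n); have eF3 := FSS (2 * n).+1.
have FL_gt0 := F_gt0 (isT : 0 < (2 * n).+1).
rewrite (_ : 2 * n.+1 = (2 * n).+2); last by lia.
have cl2 := cl_j \o cg_digits_closed dig.
exists (f n * F (2 * n).+1 + j); split.
- by move: cl2; case: (f n) le_fn => [|[|[|]]] //= _; lia.
- move=> cl; have := cg_closed_last cl; have := cg_closedS cl.
  by case: (f n) le_fn => [|[|[|]]] //= _ cl' _; [lia | have := cl_j (cl' ltac:(done)); lia].
- by apply: represents_extend => //; move: cl2; case: (f n) le_fn => [|[|[|]]] //=; lia.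
Qed.

Lemma represents_cg_digits n j : 0 < n -> 0 < j <= F (2 * n).+1 ->
  exists f, [/\ cg_digits f n, f 0 <> 0, j <= F (2 * n) -> cg_closed f n
              & represents f n j].
Proof.
elim: n j => [|n IH] // j _ /andP [j_gt0 lejF]; case: (posnP n) => [n0 | n_gt0].
  subst n; move: lejF; rewrite -[F (2 * 1).+1]/2 -[F (2 * 1)]/1 => le_j2.
  exists (fun=> j); split; [split=> *; lia | lia | | by apply: represents_single; lia].
  by move=> le_j1 i lti1 j2; lia.
have eF2 := FSS (2 * n); have eF3 := FSS (2 * n).+1; have FleL := leq_F (leqnSn (2 * n)).
move: lejF; rewrite (_ : 2 * n.+1 = (2 * n).+2); last by lia.
set L := F (2 * n).+1 in eF2 eF3 FleL * => lejF.
have [c [j0 [le_c2 ej /andP [j0_gt0 lej0L] c2_j0 c_small]]] : exists c j0,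
    [/\ c <= 2, j = c * L + j0, 0 < j0 <= L, c = 2 -> j0 <= F (2 * n)
      & j <= F (2 * n).+2 -> c < 2 /\ (c = 1 -> j0 <= F (2 * n))].
  case: (leqP j L) => [lejL | ltLj]; first by exists 0, j; split; lia.
  case: (leqP j (L + L)) => [lej2L | lt2Lj]; first by exists 1, (j - L); split; lia.
  by exists 2, (j - L - L); split; lia.
have [f [dig f0 cl rep]] := IH j0 n_gt0 (introT andP (conj j0_gt0 lej0L)).
exists (set_digit f n c); split.
- by apply: cg_digits_set => // c2; apply/cl/c2_j0.
- by rewrite set_digit_lt.
- move=> /c_small [lt_c2 c1_j0]; apply: cg_closed_set; first by lia.
  case: c lt_c2 {le_c2 ej c2_j0 c_small} c1_j0 => [|[|]] // _ c1; first by left.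
  by right; apply: cl (c1 erefl).
- have rep' : represents (set_digit f n c) n j0.
    by apply: eq_represents rep => i ltin; rewrite set_digit_lt.
  rewrite ej -{2}(set_digit_eq f n c); apply: represents_extend rep' => //.
  by rewrite set_digit_eq; case: c le_c2 {ej c_small} c2_j0 => [|[|[|]]] //=; lia.
Qed.

Lemma cg_digits_shift g a N : (forall i, i < a -> g i = 0) ->
  cg_digits g (a + N) <-> cg_digits (fun i => g (a + i)) N.
Proof.
move=> g0; split=> [[le2 sep] | [le2 sep]]; split.
- by move=> i ltiN; apply: le2; rewrite ltn_add2l.
- move=> i j ltij ltjN fi2 fj2.
  have [l [/andP [ltil ltlj] fl0]] := sep (a + i) (a + j) ltac:(lia) ltac:(lia) fi2 fj2.
  by exists (l - a); rewrite subnKC; [split=> //; lia | lia].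
- move=> i ltiaN; case: (ltnP i a) => [ltia | leai]; first by rewrite g0.
  by rewrite -(subnKC leai) le2 //; lia.
- move=> i j ltij ltjaN; case: (ltnP i a) => [ltia | leai]; first by rewrite g0.
  rewrite -(subnKC leai) -(subnKC (leq_trans leai (ltnW ltij))) => fi2 fj2.
  have [l [/andP [ltil ltlj] fl0]] := sep (i - a) (j - a) ltac:(lia) ltac:(lia) fi2 fj2.
  by exists (a + l); split=> //; lia.
Qed.

Lemma CG_repE s n : CG_rep s n <-> cg_digits (nth 0 s) (size s) /\ cg_value s = n.
Proof.
split=> [[/(all_nthP 0) le2 sep val] | [[le2 sep] val]]; first by split=> //; split.
by split=> //; apply/(all_nthP 0).
Qed.

Lemma cg_value_shift s a N : size s = a + N -> (forall i, i < a -> nth 0 s i = 0) ->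
  cg_value s = coefA (fun i => nth 0 s (a + i)) N * F (2 * a.+1)
             + coefB (fun i => nth 0 s (a + i)) N * F (2 * a.+1).+1.
Proof.
move=> sz s0; rewrite /cg_value sz big_split_ord /= big1 ?add0n; last first.
  by move=> i _; rewrite s0 ?mul0n.
rewrite /coefA /coefB !big_distrl -big_split; apply: eq_bigr => i _ /=.
by rewrite -addSn F_even_add; lia.
Qed.

Lemma min_CG s k : 0 < k ->
  (in_CG s (F (2 * k)) /\ forall x, in_CG s x -> F (2 * k) <= x) <->
  (nth 0 s k.-1 <> 0 /\ forall i, i < k.-1 -> nth 0 s i = 0).
Proof.
move=> k_gt0; have F_inj m : 0 < m -> F (2 * m) = F (2 * k) -> m = k.
  move=> m_gt0 eF; case: (ltngtP m k) => // [ltmk | ltkm].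
  - by have := @ltn_F (2 * m) (2 * k); lia.
  - by have := @ltn_F (2 * k) (2 * m); lia.
split=> [[[i [i_gt0 [si eF]]] min] | [sk s0]].
  have eik := F_inj i i_gt0 (esym eF); subst i; split=> // l ltlk.
  apply/eqP/negPn/negP => /eqP sl.
  have := min (F (2 * l.+1)) (ex_intro _ l.+1 (conj isT (conj sl erefl))).
  by have := @ltn_F (2 * l.+1) (2 * k); lia.
split=> [|x [i [i_gt0 [si ->]]]]; first by exists k.
apply: leq_F; case: (ltnP i.-1 k.-1) => [ltik | ]; [by rewrite s0 in si | lia].
Qed.

Lemma in_A_digits k n : 0 < k -> in_A k n -> exists f N,
  [/\ 0 < N, cg_digits f N, f 0 <> 0 & n = coefA f N * F (2 * k) + coefB f N * F (2 * k).+1].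
Proof.
move=> k_gt0 [_ [s [/CG_repE [dig <-] /(min_CG s k_gt0) [sk s0]]]].
have lt_ks : k.-1 < size s.
  by case: (ltnP k.-1 (size s)) => // le_sk; rewrite nth_default in sk.
have sz : size s = k.-1 + (size s - k.-1) by rewrite subnKC // ltnW.
exists (fun i => nth 0 s (k.-1 + i)), (size s - k.-1); split.
- by rewrite subn_gt0.
- by apply/cg_digits_shift => //; rewrite -sz.
- by rewrite addn0.
- by rewrite (cg_value_shift sz s0) prednK.
Qed.

Lemma digits_in_A k f N : 0 < k -> 0 < N -> cg_digits f N -> f 0 <> 0 ->
  in_A k (coefA f N * F (2 * k) + coefB f N * F (2 * k).+1).
Proof.
move=> k_gt0 N_gt0 dig f0; split.
  have := @F_gt0 (2 * k) ltac:(lia); rewrite /coefA; case: N N_gt0 dig => // N _ _.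
  by rewrite big_ord_recl /= muln1; lia.
set s := nseq k.-1 0 ++ mkseq f N.
have sz : size s = k.-1 + N by rewrite size_cat size_nseq size_mkseq.
have s_lo i : i < k.-1 -> nth 0 s i = 0.
  by move=> ltik; rewrite nth_cat size_nseq ltik nth_nseq ltik.
have s_hi i : i < N -> nth 0 s (k.-1 + i) = f i.
  by move=> ltiN; rewrite nth_cat size_nseq ltnNge leq_addr addKn nth_mkseq.
have [eA eB] := eq_coef s_hi.
exists s; split; last first.
  by apply/min_CG => //; split=> //; rewrite -(addn0 k.-1) s_hi.
apply/CG_repE; split; last by rewrite (cg_value_shift sz s_lo) prednK // eA eB.
by rewrite sz; apply/cg_digits_shift => //; apply: eq_cg_digits dig => i /s_hi.
Qed.

Definition qAS (k j : nat) : nat :=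
  (AScount isA j).+1 * F (2 * k) + AScount isB j * F (2 * k).+1.

Lemma qAS_S k j : 0 < j ->
  qAS k j.+1 = qAS k j + (if ASletter j is LA then F (2 * k) else F (2 * k).+1).
Proof. by move=> j_gt0; rewrite /qAS !AScountS //; case: (ASletter j) => /=; lia. Qed.

Lemma in_A_qAS k n : 0 < k -> in_A k n <-> exists j, 0 < j /\ qAS k j = n.
Proof.
move=> k_gt0; split=> [/(in_A_digits k_gt0) [f [N [N_gt0 dig f0 ->]]] | [j [j_gt0 <-]]].
  have [j [/andP [j_gt0 _] _ [eA eB]]] := cg_digits_represents N_gt0 dig f0.
  by exists j; rewrite /qAS -eA -eB.
have le_jF : j <= F (2 * j).+1 by apply: leq_trans (leq_idx_F j) (leq_F _); lia.
have [f [dig f0 _ [eA eB]]] := represents_cg_digits j_gt0 (introT andP (conj j_gt0 le_jF)).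
by rewrite /qAS -eA -eB; apply: digits_in_A.
Qed.

Section IncreasingEnumeration.

Variables f g : nat -> nat.
Hypothesis f_incr : forall j, 0 < j -> f j < f j.+1.
Hypothesis g_incr : forall j, 0 < j -> g j < g j.+1.

Lemma incr_from1_mono i j : 0 < i -> i <= j -> f i <= f j.
Proof.
move=> i_gt0 /subnKC <-; elim: (j - i) => [|d IH]; first by rewrite addn0.
by rewrite addnS (leq_trans IH) // ltnW // f_incr // ltn_addr.
Qed.

Lemma incr_enum_le : (forall j, 0 < j -> exists2 i, 0 < i & g j = f i) ->
  forall j, 0 < j -> f j <= g j.
Proof.
move=> sub; suff ge_idx j : 0 < j -> exists2 i, j <= i & g j = f i.
  by move=> j j_gt0; have [i leji ->] := ge_idx j j_gt0; apply: incr_from1_mono.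
elim: j => [|j IH] // _; case: (posnP j) => [-> | j_gt0]; first exact: sub.
have [i leji gfi] := IH j_gt0; have [i' i'_gt0 gfi'] := sub j.+1 isT.
exists i' => //; case: (ltnP i i') => [lt_ii' | le_i'i]; first exact: leq_ltn_trans leji lt_ii'.
by have := g_incr j_gt0; rewrite gfi gfi'; have := incr_from1_mono i'_gt0 le_i'i; lia.
Qed.

End IncreasingEnumeration.

Lemma incr_enum_eq f g :
  (forall j, 0 < j -> f j < f j.+1) -> (forall j, 0 < j -> g j < g j.+1) ->
  (forall j, 0 < j -> exists2 i, 0 < i & f j = g i) ->
  (forall j, 0 < j -> exists2 i, 0 < i & g j = f i) ->
  forall j, 0 < j -> f j = g j.
Proof.
move=> f_incr g_incr f_in g_in j j_gt0; apply/anti_leq/andP.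
by split; [apply: (incr_enum_le f_incr g_incr) | apply: (incr_enum_le g_incr f_incr)].
Qed.

Theorem lemma4p2 (k : nat) (hk : 1 <= k) (q : nat -> nat)
  (hq : enumerates_A k q) (j : nat) (hj : 2 <= j) :
  q j.+1 - q j =
    (if golden_letter j.-1 is LA then F (2 * k) else F (2 * k).+1).
Proof.
have [q_incr q_range] := hq.
have qAS_incr i : 0 < i -> qAS k i < qAS k i.+1.
  move=> i_gt0; rewrite qAS_S // -[X in X < _]addn0 ltn_add2l.
  by case: (ASletter i); apply: F_gt0; lia.
have q_in i : 0 < i -> exists2 i', 0 < i' & q i = qAS k i'.
  move=> i_gt0; have := (q_range (q i)).2 (ex_intro _ i (conj i_gt0 erefl)).
  by move=> /(in_A_qAS _ hk) [i' [i'_gt0 <-]]; exists i'.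
have qAS_in i : 0 < i -> exists2 i', 0 < i' & qAS k i = q i'.
  move=> i_gt0; have := (in_A_qAS _ hk).2 (ex_intro _ i (conj i_gt0 erefl)).
  by move=> /q_range [i' [i'_gt0 <-]]; exists i'.
have q_qAS := incr_enum_eq q_incr qAS_incr q_in qAS_in.
have j_gt0 : 0 < j by apply: ltnW.
rewrite !q_qAS // qAS_S // addKn.
by case: j hj {j_gt0 q_qAS} => [|[|j]].
Qed.
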